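(* If for some $t'>0$ the set $I(t')$ is a single point, i.e. $l(t')=r(t')$, then for all $t>t'$ the set $I(t)$ has empty interior, i.e. $l(t)=r(t)$ whenever $I(t)\ne\emptyset$.
   Context: Standing assumptions: $u_0,u_b:[0,\infty)\to\mathbb{R}$ bounded measurable with $u_b>0$; $\rho_0,\rho_b:[0,\infty)\to(0,\infty)$ positive locally bounded measurable. For $x,t,y,\tau\ge0$: $F(y,x,t)=\int_0^y[tu_0(\eta)+\eta-x]\rho_0(\eta)\,d\eta$, $G(\tau,x,t)=\int_0^\tau[x-u_b(\eta)(t-\eta)]\rho_b(\eta)u_b(\eta)\,d\eta$, $F(x,t)=\min_{y\ge0}F(y,x,t)$, $G(x,t)=\min_{\tau\ge0}G(\tau,x,t)$. For fixed $t$, $F(\cdot,t)$ is decreasing and $G(\cdot,t)$ increasing in $x$, so $I(t)=\{x\ge0:F(x,t)=G(x,t)\}$ is a closed (possibly empty) interval, written $[l(t),r(t)]$ when nonempty. *)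

From HB Require Import structures.
From mathcomp Require Import all_boot all_order all_algebra.
From mathcomp Require Import all_classical all_reals all_analysis.
Set Implicit Arguments. Unset Strict Implicit. Unset Printing Implicit Defensive.
Import Order.TTheory GRing.Theory Num.Theory.
Local Open Scope classical_set_scope.
Local Open Scope ring_scope.

Section Defs.
Variable R : realType.

Definition Fyxt (u0 rho0 : R -> R) (y x t : R) : R :=
  Rintegral lebesgue_measure `[0, y]
    (fun eta => (t * u0 eta + eta - x) * rho0 eta).

Definition Gtauxt (ub rhob : R -> R) (tau x t : R) : R :=
  Rintegral lebesgue_measure `[0, tau]
    (fun eta => (x - ub eta * (t - eta)) * rhob eta * ub eta).

(* F(x,t) = min_{y >= 0} F(y,x,t), taken as the infimum (it is attained) *)
Definition Fmin (u0 rho0 : R -> R) (x t : R) : R :=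
  inf [set Fyxt u0 rho0 y x t | y in `[0, +oo[%classic].

Definition Gmin (ub rhob : R -> R) (x t : R) : R :=
  inf [set Gtauxt ub rhob tau x t | tau in `[0, +oo[%classic].

Definition Iset (u0 rho0 ub rhob : R -> R) (t : R) : set R :=
  [set x | 0 <= x /\ Fmin u0 rho0 x t = Gmin ub rhob x t].

Definition bounded_on_halfline (f : R -> R) : Prop :=
  exists M : R, forall x, 0 <= x -> `|f x| <= M.

Definition locally_bounded_on_halfline (f : R -> R) : Prop :=
  forall a : R, exists M : R, forall x, 0 <= x <= a -> `|f x| <= M.

Definition positive_on_halfline (f : R -> R) : Prop :=
  forall x, 0 <= x -> 0 < f x.

End Defs.

From HB Require Import structures.
From mathcomp Require Import all_boot all_order all_algebra.
From mathcomp Require Import all_classical all_reals all_analysis.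
From mathcomp Require Import ring lra.
Import Order.TTheory GRing.Theory Num.Theory.
Local Open Scope classical_set_scope.
Local Open Scope ring_scope.

(* Both F(y,x,t) = t U(y) + X(y) - x P(y) and G(tau,x,t) = x Q(tau) - t B(tau) + C(tau)
   are affine in (x,t), with P, X, Q, C >= 0.  If l < r both lie in I(t), the
   monotonicity of F(.,t) and G(.,t) forces F(l,t) = F(r,t) = G(l,t) = G(r,t) =: c <= 0.
   Combining F(y,l,t) - (r-l) P(y) = F(y,r,t) >= c with the crude bound
   F(y,l,t) >= -K P(y) gives F(y,l,t) >= c K / (r-l+K) for all y, hence c = 0.
   For s = t'/t in (0,1] one has F(y,sx,st) = s F(y,x,t) + (1-s) X(y) >= 0 and likewise
   for G, so s l and s r both lie in I(t'), and l = r. *)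

Lemma is_subset1_set0_or_set1 {T} (A : set T) :
  is_subset1 A -> A = set0 \/ exists p, A = [set p].
Proof.
move=> A1; have [->|/set0P[p Ap]] := eqVneq A set0; first by left.
right; exists p; have [A0|//] := subset_set1 (fun x Ax => A1 x p Ax Ap).
by move: Ap; rewrite A0.
Qed.

Lemma is_subset1_set1 {T} (p : T) : is_subset1 [set p].
Proof. by move=> x y -> ->. Qed.

Section halfline_inf.
Context {R : realType}.
Implicit Types (f : R -> R) (c y : R).

Lemma halfline_inf_le f y : has_lbound [set f z | z in `[0, +oo[%classic] ->
  0 <= y -> inf [set f z | z in `[0, +oo[%classic] <= f y.
Proof. by move=> fbd y0; apply: ge_inf => //; exists y; rewrite //= in_itv /= y0. Qed.

Lemma le_halfline_inf f c : (forall y, 0 <= y -> c <= f y) ->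
  c <= inf [set f z | z in `[0, +oo[%classic].
Proof.
move=> cf; apply: lb_le_inf; first by exists (f 0), 0; rewrite //= in_itv /= lexx.
by move=> _ [y + <-]; rewrite /= in_itv /= andbT; exact: cf.
Qed.

End halfline_inf.

Section locally_bounded_measurable.
Context {R : realType}.
Local Notation mu := (@lebesgue_measure R).
Implicit Types f g : R -> R.

Definition locbdd_mfun f :=
  measurable_fun (`[0, +oo[%classic : set R) f /\ locally_bounded_on_halfline f.

Lemma locbdd_mfun_cst c : locbdd_mfun (fun _ => c).
Proof. by split=> [|a]; [exact: measurable_cst | exists `|c|]. Qed.

Lemma locbdd_mfun_id : locbdd_mfun id.
Proof.
split=> [|a]; first exact: measurable_id.
by exists `|a| => x /andP[x0 xa]; rewrite ger0_norm // (le_trans xa) ?ler_norm.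
Qed.

Lemma locbdd_mfun_bounded {f} : measurable_fun (`[0, +oo[%classic : set R) f ->
  bounded_on_halfline f -> locbdd_mfun f.
Proof. by move=> mf [M fM]; split=> // a; exists M => x /andP[x0 _]; exact: fM. Qed.

Lemma locbdd_mfunD f g : locbdd_mfun f -> locbdd_mfun g ->
  locbdd_mfun (fun x => f x + g x).
Proof.
move=> [mf bf] [mg bg]; split; first exact: measurable_realfun.measurable_funD.
move=> a; have [M fM] := bf a; have [N gN] := bg a.
by exists (M + N) => x xa; rewrite (le_trans (ler_normD _ _)) ?lerD ?fM ?gN.
Qed.

Lemma locbdd_mfunN f : locbdd_mfun f -> locbdd_mfun (fun x => - f x).
Proof.
move=> [mf bf]; split; first exact: measurable_realfun.measurable_funN.
by move=> a; have [M fM] := bf a; exists M => x xa; rewrite normrN fM.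
Qed.

Lemma locbdd_mfunM f g : locbdd_mfun f -> locbdd_mfun g ->
  locbdd_mfun (fun x => f x * g x).
Proof.
move=> [mf bf] [mg bg]; split; first exact: measurable_realfun.measurable_funM.
move=> a; have [M fM] := bf a; have [N gN] := bg a.
by exists (M * N) => x xa; rewrite normrM ler_pM ?fM ?gN.
Qed.

Lemma locbdd_mfun_indic a : locbdd_mfun (\1_(`[0, a]%classic : set R)).
Proof.
split=> [|b]; first by apply: measurable_realfun.measurable_indic; exact: measurable_itv.
by exists 1 => x _; rewrite indicE; case: (_ \in _); rewrite ?normr1 ?normr0.
Qed.

Lemma locbdd_mfun_integrable f y : locbdd_mfun f ->
  mu.-integrable `[0, y] (EFin \o f).
Proof.
move=> [mf bf]; apply: measurable_bounded_integrable.
- exact: measurable_itv.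
- by rewrite /= lebesgue_measure_itv /=; case: ifP => _; rewrite -?EFinD ?ltry.
- apply: (measurable_funS _ _ mf); first exact: measurable_itv.
  by move=> x /=; rewrite !in_itv /= andbT => /andP[].
- have [M fM] := bf y; exists M; split; first exact: num_real.
  move=> N MN x /=; rewrite in_itv /= => xy.
  exact: le_trans (fM x xy) (ltW MN).
Qed.

End locally_bounded_measurable.

Ltac locbdd := repeat first [ assumption | apply: locbdd_mfunD | apply: locbdd_mfunN
  | apply: locbdd_mfunM | apply: locbdd_mfun_cst | apply: locbdd_mfun_id
  | apply: locbdd_mfun_indic ].

Lemma mulr_ge_Nbound {R : realDomainType} (b w r N : R) :
  0 <= b -> - b <= w -> 0 <= r <= N -> - (b * N) <= w * r.
Proof. by move=> b0 bw /andP[r0 rN]; nra. Qed.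

Section halfline_integral_lbound.
Context {R : realType}.
Local Notation mu := (@lebesgue_measure R).

Lemma Rintegral_indic_itv0_le (a y : R) : 0 <= a ->
  Rintegral mu `[0, y] (\1_(`[0, a]%classic : set R)) <= a.
Proof.
move=> a0; rewrite /Rintegral
  (@integral_indic _ _ _ mu _ (measurable_itv `[0, y]) _ (measurable_itv `[0, a])).
have Ia : (mu (`[0%R, a] `&` `[0%R, y]) <= a%:E)%E.
  apply: le_trans (measureIl mu (measurable_itv _) (measurable_itv _)) _.
  by rewrite /= lebesgue_measure_itv /= lte_fin oppr0 adde0; case: ifP.
rewrite -lee_fin fineK // ge0_fin_numE ?measure_ge0 //.
exact: le_lt_trans Ia (ltry _).
Qed.

Lemma Rintegral_itv0_ge (f : R -> R) (y a A : R) :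
  locbdd_mfun f -> 0 <= a -> 0 <= A ->
  (forall x, 0 <= x <= a -> - A <= f x) -> (forall x, a < x -> 0 <= f x) ->
  - (A * a) <= Rintegral mu `[0, y] f.
Proof.
move=> bf a0 A0 fa f0.
have mI : measurable (`[0, y]%classic : set R) by exact: measurable_itv.
have indic_le : Rintegral mu `[0, y] (fun x => - A * \1_(`[0, a]%classic : set R) x)
    <= Rintegral mu `[0, y] f.
  apply: le_Rintegral => //; [by apply: locbdd_mfun_integrable; locbdd|
    exact: locbdd_mfun_integrable|].
  move=> x /=; rewrite in_itv /= => /andP[x0 _]; rewrite indicE.
  have [xa|ax] := lerP x a.
    by rewrite mem_set ?mulr1 ?fa ?x0 //= in_itv /= x0 xa.
  by rewrite memNset ?mulr0 ?f0 //= in_itv /= x0 leNgt ax.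
apply: le_trans indic_le; rewrite RintegralZl //.
  by rewrite mulNr lerN2 ler_wpM2l ?Rintegral_indic_itv0_le.
by apply: locbdd_mfun_integrable; locbdd.
Qed.

Lemma Rintegral_mul_has_lbound (w r : R -> R) (a b : R) :
  locbdd_mfun w -> locbdd_mfun r -> (forall e, 0 <= e -> 0 <= r e) ->
  0 <= a -> 0 <= b ->
  (forall e, 0 <= e <= a -> - b <= w e) -> (forall e, a < e -> 0 <= w e) ->
  has_lbound [set Rintegral mu `[0, y] (fun e => w e * r e) | y in `[0, +oo[%classic].
Proof.
move=> bw br r0 a0 b0 wa w0; have [M rM] := br.2 a.
have M0 : 0 <= M by rewrite (le_trans _ (rM 0 _)) ?lexx.
exists (- (b * M * a)) => _ [y _ <-]; apply: Rintegral_itv0_ge; rewrite ?mulr_ge0 //.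
- by apply: locbdd_mfunM.
- move=> e /[dup] ea /andP[e0 _]; apply: mulr_ge_Nbound; rewrite ?wa ?r0 //=.
  by rewrite (le_trans (ler_norm _)) ?rM.
- move=> e ae; rewrite mulr_ge0 ?w0 ?r0 //; exact: le_trans (ltW ae).
Qed.

End halfline_integral_lbound.

Section characteristics.
Context {R : realType} {u0 ub rho0 rhob : R -> R}.
Hypotheses (mu0 : measurable_fun (`[0, +oo[%classic : set R) u0)
  (mub : measurable_fun (`[0, +oo[%classic : set R) ub)
  (mrho0 : measurable_fun (`[0, +oo[%classic : set R) rho0)
  (mrhob : measurable_fun (`[0, +oo[%classic : set R) rhob)
  (bu0 : bounded_on_halfline u0) (bub : bounded_on_halfline ub)
  (pub : positive_on_halfline ub)
  (prho0 : positive_on_halfline rho0) (prhob : positive_on_halfline rhob)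
  (lrho0 : locally_bounded_on_halfline rho0)
  (lrhob : locally_bounded_on_halfline rhob).

Local Notation mu := (@lebesgue_measure R).
Local Notation F := (Fyxt u0 rho0).
Local Notation G := (Gtauxt ub rhob).
Local Notation Fm := (Fmin u0 rho0).
Local Notation Gm := (Gmin ub rhob).
Local Notation I := (Iset u0 rho0 ub rhob).

Let bdd_u0 : locbdd_mfun u0 := locbdd_mfun_bounded mu0 bu0.
Let bdd_ub : locbdd_mfun ub := locbdd_mfun_bounded mub bub.
Let bdd_rho0 : locbdd_mfun rho0 := conj mrho0 lrho0.
Let bdd_rhob : locbdd_mfun rhob := conj mrhob lrhob.

Let P y := Rintegral mu `[0, y] rho0.
Let U y := Rintegral mu `[0, y] (fun e => u0 e * rho0 e).
Let X y := Rintegral mu `[0, y] (fun e => e * rho0 e).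
Let Q y := Rintegral mu `[0, y] (fun e => rhob e * ub e).
Let B y := Rintegral mu `[0, y] (fun e => ub e * ub e * rhob e).
Let C y := Rintegral mu `[0, y] (fun e => e * (ub e * ub e * rhob e)).

Let Rintegral_itv0_ge0 (f : R -> R) y :
  (forall e, 0 <= e -> 0 <= f e) -> 0 <= Rintegral mu `[0, y] f.
Proof.
by move=> f0; apply: Rintegral_ge0 => e; rewrite /= in_itv /= => /andP[/f0].
Qed.

Let P_ge0 y : 0 <= P y.
Proof. by apply: Rintegral_itv0_ge0 => e /prho0/ltW. Qed.

Let X_ge0 y : 0 <= X y.
Proof. by apply: Rintegral_itv0_ge0 => e e0; rewrite mulr_ge0 // ltW ?prho0. Qed.

Let Q_ge0 y : 0 <= Q y.
Proof. by apply: Rintegral_itv0_ge0 => e e0; rewrite mulr_ge0 // ltW ?prhob ?pub. Qed.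

Let C_ge0 y : 0 <= C y.
Proof.
by apply: Rintegral_itv0_ge0 => e e0; rewrite !mulr_ge0 // ltW ?prhob ?pub.
Qed.

Lemma Fyxt_affine y x t : F y x t = t * U y + X y - x * P y.
Proof.
have mI : measurable (`[0, y]%classic : set R) by exact: measurable_itv.
rewrite /Fyxt (@eq_Rintegral _ _ _ mu _ (fun e =>
  t * (u0 e * rho0 e) + e * rho0 e - x * rho0 e)); last by move=> e _; ring.
rewrite RintegralB ?RintegralD ?RintegralZl //.
all: by apply: locbdd_mfun_integrable; locbdd.
Qed.

Lemma Gtauxt_affine y x t : G y x t = x * Q y - t * B y + C y.
Proof.
have mI : measurable (`[0, y]%classic : set R) by exact: measurable_itv.
rewrite /Gtauxt (@eq_Rintegral _ _ _ mu _ (fun e =>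
  x * (rhob e * ub e) - t * (ub e * ub e * rhob e) + e * (ub e * ub e * rhob e)));
  last by move=> e _; ring.
rewrite RintegralD ?RintegralB ?RintegralZl //.
all: by apply: locbdd_mfun_integrable; locbdd.
Qed.

(* [Fmin] and [Gmin] are infima, which are junk values unless the sets are bounded below. *)
Lemma Fyxt_has_lbound x t : 0 <= x -> 0 <= t ->
  has_lbound [set F y x t | y in `[0, +oo[%classic].
Proof.
move=> x0 t0; have [M uM] := bu0; have M0 : 0 <= M by rewrite (le_trans _ (uM 0 _)).
have uMt e : 0 <= e -> - (t * M) <= t * u0 e.
  by move=> e0; have := uM e e0; rewrite ler_norml => /andP[]; nra.
apply: (@Rintegral_mul_has_lbound _ (fun e => t * u0 e + e - x) rho0 (x + t * M)
  (x + t * M)); rewrite ?addr_ge0 ?mulr_ge0 //; first by locbdd.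
- by move=> e /prho0/ltW.
- by move=> e /andP[e0 _]; have := uMt e e0; lra.
- move=> e ae; have e0 := le_trans (addr_ge0 x0 (mulr_ge0 t0 M0)) (ltW ae).
  by have := uMt e e0; lra.
Qed.

Lemma Gtauxt_has_lbound x t : 0 <= x -> 0 <= t ->
  has_lbound [set G y x t | y in `[0, +oo[%classic].
Proof.
move=> x0 t0; have [M uM] := bub; have M0 : 0 <= M by rewrite (le_trans _ (uM 0 _)).
have [N rN] := lrhob t; have N0 : 0 <= N by rewrite (le_trans _ (rN 0 _)) ?lexx.
apply: (@Rintegral_mul_has_lbound _ (fun e => (x - ub e * (t - e)) * rhob e) ub t
  (M * t * N)); rewrite ?mulr_ge0 //; first by locbdd.
- by move=> e /pub/ltW.
- move=> e /[dup] et /andP[e0 le]; apply: mulr_ge_Nbound; rewrite ?mulr_ge0 //=.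
    have := uM e e0; have := pub e e0; rewrite ler_norml; nra.
  by rewrite ltW ?prhob // (le_trans (ler_norm _)) ?rN.
- move=> e te; have e0 := le_trans t0 (ltW te).
  by apply: mulr_ge0; [have := pub e e0; nra | exact/ltW/prhob].
Qed.

Lemma Fmin_le {x t y} : 0 <= x -> 0 <= t -> 0 <= y -> Fm x t <= F y x t.
Proof. by move=> x0 t0; apply: halfline_inf_le; exact: Fyxt_has_lbound. Qed.

Lemma Gmin_le {x t y} : 0 <= x -> 0 <= t -> 0 <= y -> Gm x t <= G y x t.
Proof. by move=> x0 t0; apply: halfline_inf_le; exact: Gtauxt_has_lbound. Qed.

Lemma Fmin_le0 x t : 0 <= x -> 0 <= t -> Fm x t <= 0.
Proof.
move=> x0 t0; apply: le_trans (Fmin_le x0 t0 (lexx 0)) _.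
by rewrite /Fyxt set_itv1 Rintegral_set1.
Qed.

Lemma Gmin_le0 x t : 0 <= x -> 0 <= t -> Gm x t <= 0.
Proof.
move=> x0 t0; apply: le_trans (Gmin_le x0 t0 (lexx 0)) _.
by rewrite /Gtauxt set_itv1 Rintegral_set1.
Qed.

Lemma Fmin_nonincreasing l r t : 0 <= l <= r -> 0 <= t -> Fm r t <= Fm l t.
Proof.
move=> /andP[l0 lr] t0; apply: le_halfline_inf => y y0.
rewrite (le_trans (Fmin_le (le_trans l0 lr) t0 y0)) // !Fyxt_affine.
by have := ler_wpM2r (P_ge0 y) lr; lra.
Qed.

Lemma Gmin_nondecreasing l r t : 0 <= l <= r -> 0 <= t -> Gm l t <= Gm r t.
Proof.
move=> /andP[l0 lr] t0; apply: le_halfline_inf => y y0.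
rewrite (le_trans (Gmin_le l0 t0 y0)) // !Gtauxt_affine.
by have := ler_wpM2r (Q_ge0 y) lr; lra.
Qed.

Lemma Iset_Fmin_eq {l r t} : 0 <= t -> l <= r -> I t l -> I t r -> Fm r t = Fm l t.
Proof.
move=> t0 lr [l0 FGl] [_ FGr]; apply/le_anti.
by rewrite Fmin_nonincreasing ?l0 //= FGl FGr Gmin_nondecreasing ?l0.
Qed.

Lemma Fyxt_ge_mass {x t} : 0 <= x -> 0 <= t ->
  exists2 K, 0 <= K & forall y, - (K * P y) <= F y x t.
Proof.
move=> x0 t0; have [M uM] := bu0; have M0 : 0 <= M by rewrite (le_trans _ (uM 0 _)).
exists (x + t * M); first by rewrite addr_ge0 ?mulr_ge0.
move=> y; rewrite -mulNr -RintegralZl; first last.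
- exact: locbdd_mfun_integrable.
- exact: measurable_itv.
apply: le_Rintegral; first exact: measurable_itv.
- by apply: locbdd_mfun_integrable; locbdd.
- by apply: locbdd_mfun_integrable; locbdd.
move=> e; rewrite /= in_itv /= => /andP[e0 _]; apply: ler_wpM2r; first exact/ltW/prho0.
by have := uM e e0; rewrite ler_norml => /andP[]; nra.
Qed.

Lemma Fmin_flat_eq0 {l r t} :
  0 <= l < r -> 0 <= t -> Fm r t = Fm l t -> Fm l t = 0.
Proof.
move=> /andP[l0 lr] t0 Frl; have r0 := le_trans l0 (ltW lr).
have [K K0 FK] := Fyxt_ge_mass l0 t0.
have dK : 0 < r - l + K by rewrite ltr_wpDr // subr_gt0.
have cK : Fm l t * K / (r - l + K) <= Fm l t.
  apply: le_halfline_inf => y y0; rewrite ler_pdivrMr //.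
  have Fr : Fm l t <= F y l t - (r - l) * P y.
    by rewrite -Frl (le_trans (Fmin_le r0 t0 y0)) // !Fyxt_affine; lra.
  have := FK y; have := P_ge0 y; nra.
apply/le_anti; rewrite Fmin_le0 //=; move: cK; rewrite ler_pdivrMr //; nra.
Qed.

Lemma Fmin_scale x t s : 0 <= x -> 0 <= t -> 0 < s <= 1 ->
  Fm x t = 0 -> Fm (s * x) (s * t) = 0.
Proof.
move=> x0 t0 /andP[/ltW s0 s1] Fx0; apply/le_anti; rewrite Fmin_le0 ?mulr_ge0 //=.
apply: le_halfline_inf => y y0; have := Fmin_le x0 t0 y0.
by rewrite Fx0 !Fyxt_affine; have := X_ge0 y; nra.
Qed.

Lemma Gmin_scale x t s : 0 <= x -> 0 <= t -> 0 < s <= 1 ->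
  Gm x t = 0 -> Gm (s * x) (s * t) = 0.
Proof.
move=> x0 t0 /andP[/ltW s0 s1] Gx0; apply/le_anti; rewrite Gmin_le0 ?mulr_ge0 //=.
apply: le_halfline_inf => y y0; have := Gmin_le x0 t0 y0.
by rewrite Gx0 !Gtauxt_affine; have := C_ge0 y; nra.
Qed.

Lemma Iset_scale x t s : 0 <= t -> 0 < s <= 1 -> I t x -> Fm x t = 0 ->
  I (s * t) (s * x).
Proof.
move=> t0 s01 [x0 FGx] Fx0; have /andP[/ltW s0 _] := s01.
by split; rewrite ?mulr_ge0 // Fmin_scale ?Gmin_scale // -FGx.
Qed.

Lemma Iset_subsingleton {t' t} : 0 < t' -> t' < t -> is_subset1 (I t') ->
  is_subset1 (I t).
Proof.
move=> t'0 t't I1; have t0 : 0 < t := lt_trans t'0 t't.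
have [s s01 t'E] : exists2 s, 0 < s <= 1 & t' = s * t.
  exists (t' / t); last by rewrite divfK ?gt_eqF.
  by rewrite divr_gt0 // ler_pdivrMr // mul1r ltW.
suff flat x y : x < y -> I t x -> I t y -> x = y.
  move=> x y Ix Iy; case: (ltgtP x y) => [xy|yx|//]; first exact: flat.
  exact/esym/flat.
move=> xy Ix Iy; have x0 := Ix.1.
have Fyx := Iset_Fmin_eq (ltW t0) (ltW xy) Ix Iy.
have Fx0 : Fm x t = 0 by apply: (Fmin_flat_eq0 _ (ltW t0) Fyx); rewrite x0.
have Fy0 : Fm y t = 0 by rewrite Fyx.
have /andP[s0 _] := s01.
apply: (mulfI (lt0r_neq0 s0)); apply: I1; rewrite t'E.
all: by apply: Iset_scale => //; exact: ltW.
Qed.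

End characteristics.

Theorem corollary2p8 (R : realType) (u0 ub rho0 rhob : R -> R)
  (mu0 : measurable_fun (`[0, +oo[%classic : set R) u0)
  (mub : measurable_fun (`[0, +oo[%classic : set R) ub)
  (mrho0 : measurable_fun (`[0, +oo[%classic : set R) rho0)
  (mrhob : measurable_fun (`[0, +oo[%classic : set R) rhob)
  (bu0 : bounded_on_halfline u0) (bub : bounded_on_halfline ub)
  (pub : positive_on_halfline ub)
  (prho0 : positive_on_halfline rho0) (prhob : positive_on_halfline rhob)
  (lrho0 : locally_bounded_on_halfline rho0)
  (lrhob : locally_bounded_on_halfline rhob)
  (t' : R) (ht' : 0 < t')
  (hsingle : exists p : R, Iset u0 rho0 ub rhob t' = [set p]) :
  forall t : R, t' < t ->
    Iset u0 rho0 ub rhob t = set0 \/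
    exists p : R, Iset u0 rho0 ub rhob t = [set p].
Proof.
move=> t t't; apply: is_subset1_set0_or_set1.
apply: (Iset_subsingleton mu0 mub mrho0 mrhob bu0 bub pub prho0 prhob lrho0 lrhob
  ht' t't).
by have [p ->] := hsingle; exact: is_subset1_set1.
Qed.
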